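(* Let $P$ be an enhanced Gelfand--Zetlin pattern with top row $\lambda$, viewed as a graph whose vertices are its entries and whose edges are its edges. Then: (1) two entries of row $0$ belong to the same connected component if and only if they have the same value; (2) each connected component either has a unique highest vertex (a unique vertex in its row of smallest index) or contains at least one entry of row $0$; (3) all vertices of a connected component, possibly except the highest one, are encircled; in particular, the number of connected components is at least the number of distinct values among $\lambda_1,\dots,\lambda_n$ plus the number of non-encircled entries.
   Context: Let $\lambda=(\lambda_1\ge\dots\ge\lambda_n)$ be a partition. A GZ pattern with top row $\lambda$ is an integer array $a_{ij}$, $0\le i\le n-1$, $1\le j\le n-i$ (row $0$ is the top row), with $a_{0j}=\lambda_{n+1-j}$ and $a_{i-1,j}\le a_{ij}\le a_{i-1,j+1}$ ($a_{ij}$ sits below $a_{i-1,j}$ and $a_{i-1,j+1}$). An enhanced GZ pattern is such an array with a set of encircled entries and a set of edges, each joining an $a_{ij}$ ($i\ge1$) with $a_{i-1,j}$ or $a_{i-1,j+1}$, such that: (1) row $0$ entries are encircled; (2) entries joined by an edge are equal and the lower one is encircled; (3) for $i\ge1$, $1\le j\le n-i-1$: both $a_{ij},a_{i,j+1}$ are joined to $a_{i-1,j+1}$ iff both are joined to $a_{i+1,j}$; (4) if $a_{0j}=a_{0,j+1}$ then $a_{1j}$ is encircled and joined to both; (5) if $a_{i-1,j}<a_{i-1,j+1}$ and $a_{ij}=a_{i-1,j}$, then $a_{ij}$ is encircled and joined to $a_{i-1,j}$; (6) if $a_{i-1,j}<a_{i-1,j+1}$, $a_{ij}=a_{i-1,j+1}$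 and $a_{ij}$ is encircled, then it is joined to $a_{i-1,j+1}$; (7) if $a_{i-1,j}=a_{i-1,j+1}=a_{ij}$ and $a_{i-1,j},a_{i-1,j+1}$ can be connected by a path of edges, then $a_{ij}$ is encircled and joined to both; (8) if $a_{i-1,j}=a_{i-1,j+1}=a_{ij}$ and $a_{ij}$ is encircled, then it is joined to at least one of them. *)

From HB Require Import structures.
From mathcomp Require Import all_boot all_order all_algebra.
Set Implicit Arguments. Unset Strict Implicit. Unset Printing Implicit Defensive.
Import Order.TTheory GRing.Theory Num.Theory.

(* Conventions: rows i are 0-indexed (prow 0 = top prow), columns j are
   1-indexed as in the paper: entry a_{ij} exists iff 0 <= i <= n-1 and
   1 <= j <= n-i.  The partition lambda is lam : nat -> int, 1-indexed
   (lam 1 >= ... >= lam n >= 0).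
   An enhanced pattern is given by
     a   : nat -> nat -> int   (entries),
     enc : nat -> nat -> bool  (encircled entries),
     eL i j : a_{ij} (i >= 1) is joined by an edge to a_{i-1,j},
     eR i j : a_{ij} (i >= 1) is joined by an edge to a_{i-1,j+1}.
   Values outside the valid index range are irrelevant. *)

Definition valid (n i j : nat) : bool := [&& i < n, 0 < j & i + j <= n].

Definition pos (n : nat) :=
  {p : 'I_n * 'I_n.+1 | (0 < p.2) && (p.1 + p.2 <= n)}.

Definition prow {n} (p : pos n) : nat := (val p).1.
Definition pcol {n} (p : pos n) : nat := (val p).2.

Definition gz_adj n (eL eR : nat -> nat -> bool) : rel (pos n) :=
  fun p q =>
    [|| [&& (prow q).+1 == prow p, pcol q == pcol p & eL (prow p) (pcol p)],
        [&& (prow q).+1 == prow p, pcol q == (pcol p).+1 & eR (prow p) (pcol p)],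
        [&& (prow p).+1 == prow q, pcol p == pcol q & eL (prow q) (pcol q)]
      | [&& (prow p).+1 == prow q, pcol p == (pcol q).+1 & eR (prow q) (pcol q)]].

Definition gz_conn n (eL eR : nat -> nat -> bool) (p q : pos n) : bool :=
  connect (gz_adj eL eR) p q.

Definition is_partition (n : nat) (lam : nat -> int) : Prop :=
  (forall k, 0 < k < n -> (lam k.+1 <= lam k)%R) /\ (0 < n -> (0 <= lam n)%R).

Definition is_GZ n (lam : nat -> int) (a : nat -> nat -> int) : Prop :=
  (forall j, 0 < j <= n -> a 0 j = lam (n.+1 - j)) /\
  (forall i j, 0 < i -> valid n i j ->
     (a i.-1 j <= a i j)%R /\ (a i j <= a i.-1 j.+1)%R).

Definition is_enhanced_GZ n (lam : nat -> int) (a : nat -> nat -> int)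
    (enc eL eR : nat -> nat -> bool) : Prop :=
  is_GZ n lam a /\
  (* (1) *) (forall j, valid n 0 j -> enc 0 j) /\
  (* (2) *) (forall i j, 0 < i -> valid n i j ->
               (eL i j -> a i j = a i.-1 j /\ enc i j) /\
               (eR i j -> a i j = a i.-1 j.+1 /\ enc i j)) /\
  (* (3) *) (forall i j, 0 < i -> 0 < j -> j <= n - i - 1 ->
               (eR i j && eL i j.+1) = (eL i.+1 j && eR i.+1 j)) /\
  (* (4) *) (forall j, 0 < j -> j < n -> a 0 j = a 0 j.+1 ->
               [&& enc 1 j, eL 1 j & eR 1 j]) /\
  (* (5) *) (forall i j, 0 < i -> valid n i j ->
               (a i.-1 j < a i.-1 j.+1)%R -> a i j = a i.-1 j ->
               enc i j && eL i j) /\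
  (* (6) *) (forall i j, 0 < i -> valid n i j ->
               (a i.-1 j < a i.-1 j.+1)%R -> a i j = a i.-1 j.+1 ->
               enc i j -> eR i j) /\
  (* (7) *) (forall p q r : pos n,
               prow p = prow q -> pcol q = (pcol p).+1 ->
               prow r = (prow p).+1 -> pcol r = pcol p ->
               a (prow p) (pcol p) = a (prow q) (pcol q) ->
               a (prow q) (pcol q) = a (prow r) (pcol r) ->
               gz_conn eL eR p q ->
               [&& enc (prow r) (pcol r), eL (prow r) (pcol r) & eR (prow r) (pcol r)]) /\
  (* (8) *) (forall i j, 0 < i -> valid n i j ->
               a i.-1 j = a i.-1 j.+1 -> a i.-1 j.+1 = a i j ->
               enc i j -> eL i j || eR i j).

Definition gz_components n (eL eR : nat -> nat -> bool) : {set {set pos n}} :=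
  [set [set q | gz_conn eL eR p q] | p : pos n].

From HB Require Import structures.
From mathcomp Require Import all_boot all_order all_algebra.
From mathcomp Require Import zify.
Import Order.TTheory GRing.Theory Num.Theory.
Set Implicit Arguments. Unset Strict Implicit. Unset Printing Implicit Defensive.

(* Orient every edge upwards, from a_{ij} to the entry of row i-1 it is joined
   to.  Axiom (3) makes this relation locally confluent: an entry joined to both
   of its upper neighbours forces those two to be joined to the common entry two
   rows up.  The only exception is in row 1, where both targets lie in row 0.
   A Newman-style induction on the row then shows that two connected vertices
   either have a common upper vertex or both reach row 0.  Hence a vertex lying
   strictly below some vertex of its component has an upward edge, so it is
   encircled by axiom (2), and a component not meeting row 0 has a unique
   highest vertex.  Edges join equal entries, and by (4) and the interlacing
   condition equal entries of row 0 are linked through row 1, which gives (1).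
   For the count: components meeting row 0 correspond to the distinct values
   of lambda, and each non-encircled entry is the highest vertex of its own
   component, which does not meet row 0. *)

Definition undirected (T : Type) (e : rel T) : rel T := [rel x y | e x y || e y x].

Section GradedConfluence.

Variables (T : finType) (e : rel T) (h : T -> nat).
Hypothesis e_rank : forall x y, e x y -> (h y).+1 = h x.
Hypothesis e_diamond : forall x y z,
  1 < h x -> e x y -> e x z -> y != z -> exists2 t, e y t & e z t.

Definition reaches_top x := exists2 r, connect e x r & h r = 0.

Definition joinable x y :=
  (exists2 w, connect e x w & connect e y w) \/ reaches_top x /\ reaches_top y.

Lemma connect_step x y : connect e x y -> x = y \/ exists2 z, e x z & connect e z y.
Proof.
case/connectP=> [[|z p]] /= => [_ -> | /andP[exz pz] ->]; first by left.
by right; exists z => //; apply/connectP; exists p.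
Qed.

Lemma connect_rank x y : connect e x y -> x = y \/ h y < h x.
Proof.
case/connectP=> p; elim: p x => [|z p IH] x /=; first by left.
case/andP=> /e_rank exz /IH{}IH /IH[<-|]; right; lia.
Qed.

Lemma connect_rank0 r w : h r = 0 -> connect e r w -> w = r.
Proof. by move=> r0 /connect_rank[-> | ]; rewrite ?r0. Qed.

Lemma reaches_top_trans x y : connect e x y -> reaches_top y -> reaches_top x.
Proof. by move=> xy [r yr r0]; exists r => //; apply: connect_trans xy yr. Qed.

Lemma connect_confluent x y z : connect e x y -> connect e x z -> joinable y z.
Proof.
have [k hx] : exists k, h x <= k by exists (h x).
elim: k x hx y z => [|k IH] x hx y z.
  have x0 : h x = 0 by lia.
  by move=> /(connect_rank0 x0)-> /(connect_rank0 x0)->; left; exists x.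
move=> /connect_step[<- xz | [y1 xy1 y1y]]; first by left; exists z.
case/connect_step=> [<- | [z1 xz1 z1z]].
  by left; exists y => //; apply: connect_trans (connect1 xy1) y1y.
have ky1 : h y1 <= k by have := e_rank xy1; lia.
have kz1 : h z1 <= k by have := e_rank xz1; lia.
have [yz1 | ne] := eqVneq y1 z1; first by subst z1; exact: IH _ ky1 _ _ y1y z1z.
have [hx1 | hx1] := leqP (h x) 1; last first.
  have [t y1t z1t] := e_diamond hx1 xy1 xz1 ne.
  have [[w yw tw] | [ty [r tr r0]]] := IH _ ky1 _ _ y1y (connect1 y1t).
    have z1w := connect_trans (connect1 z1t) tw.
    have [[w' ww' zw'] | [tw' tz]] := IH _ kz1 _ _ z1w z1z.
      by left; exists w' => //; apply: connect_trans yw ww'.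
    by right; split => //; apply: reaches_top_trans yw tw'.
  have [[w rw zw] | [_ tz]] := IH _ kz1 _ _ (connect_trans (connect1 z1t) tr) z1z.
    by right; split=> //; exists r; rewrite // -(connect_rank0 r0 rw).
  by right.
have y10 : h y1 = 0 by have := e_rank xy1; lia.
have z10 : h z1 = 0 by have := e_rank xz1; lia.
rewrite (connect_rank0 y10 y1y) (connect_rank0 z10 z1z).
by right; split; [exists y1 | exists z1].
Qed.

Lemma reaches_top_connect x y : connect e x y -> reaches_top x -> reaches_top y.
Proof.
move=> xy [r xr r0]; have [[w yw rw] | [] //] := connect_confluent xy xr.
by exists r; rewrite // -(connect_rank0 r0 rw).
Qed.

Lemma undirected_joinable x y : connect (undirected e) x y -> joinable x y.
Proof.
case/connectP=> p; elim: p x => [|z p IH] x /=; first by move=> _ ->; left; exists x.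
case/andP=> /orP[exz | ezx] /IH{}IH /IH[[w zw yw] | [tz ty]].
- by left; exists w => //; apply: connect_trans (connect1 exz) zw.
- by right; split => //; apply: reaches_top_trans (connect1 exz) tz.
- have [[w' xw' ww'] | [tx tw]] := connect_confluent (connect1 ezx) zw.
    by left; exists w' => //; apply: connect_trans yw ww'.
  by right; split => //; apply: reaches_top_trans yw tw.
- by right; split => //; apply: reaches_top_connect (connect1 ezx) tz.
Qed.

Lemma undirected_rank_lt_step p q :
  connect (undirected e) p q -> h p < h q -> exists z, e q z.
Proof.
case/undirected_joinable=> [[w pw /connect_step[qw | [z qz _]]] | [_ [r qr r0]]] lt;
  try by exists z.
- by exfalso; subst w; case/connect_rank: pw => [pq | ]; [subst q; lia | lia].
- by case/connect_step: qr => [qr | [z qz _]]; [exfalso; subst r; lia | exists z].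
Qed.

Lemma undirected_top_unique p q :
  connect (undirected e) p q -> h p = h q -> 0 < h p ->
  (forall r, connect (undirected e) p r -> h p <= h r) -> p = q.
Proof.
move=> pq hpq hp hmin.
have sub : subrel (connect e) (connect (undirected e)).
  by apply: connect_sub => x y exy; apply: connect1; rewrite /undirected /= exy.
case/undirected_joinable: pq => [[w pw qw] | [[r pr r0] _]]; last first.
  by have := hmin r (sub _ _ pr); lia.
have := hmin w (sub _ _ pw).
case/connect_rank: pw => [pw _ | ? ?]; last by exfalso; lia.
by subst w; case/connect_rank: qw => [-> | ?]; last by exfalso; lia.
Qed.

End GradedConfluence.

Lemma size_undup_map_factor (T U V : eqType) (f : T -> U) (g : T -> V) s :
  {in s &, forall x y, g x = g y -> f x = f y} ->
  size (undup (map f s)) <= size (undup (map g s)).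
Proof.
elim: s => //= x s IH gf.
have {IH} IH : size (undup (map f s)) <= size (undup (map g s)).
  by apply: IH => y z ys zs; apply: gf; rewrite inE ?ys ?zs orbT.
have [gxs | gxs] := boolP (g x \in map g s); rewrite ?gxs ?(negbTE gxs); last first.
  by case: ifP => _ /=; [exact: leqW | exact: IH].
have [y ys gxy] := mapP gxs.
by rewrite (_ : f x \in map f s) // (gf x y) ?map_f ?inE ?eqxx ?ys ?orbT.
Qed.

Lemma card_imset_undup (T V : finType) (g : T -> V) (A : {pred T}) :
  #|g @: A| = size (undup [seq g x | x in A]).
Proof.
rewrite imset_card -(card_uniqP (undup_uniq _)).
by apply: eq_card => y; rewrite mem_undup.
Qed.

Section EnhancedPattern.

Variables (n : nat) (lam : nat -> int) (a : nat -> nat -> int).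
Variables (enc eL eR : nat -> nat -> bool).
Implicit Types p q r t : pos n.

Lemma pos_inj p q : prow p = prow q -> pcol p = pcol q -> p = q.
Proof.
case: p q => [[x1 y1] hp] [[x2 y2] hq]; rewrite /prow /pcol /= => e1 e2.
by apply: val_inj; congr pair; apply: val_inj.
Qed.

Lemma valid_pos p : valid n (prow p) (pcol p).
Proof.
by case: p => [[x y] xy]; rewrite /valid /prow /pcol /= ltn_ord; case/andP: xy => -> ->.
Qed.

Lemma exists_pos i j : valid n i j -> exists p : pos n, prow p = i /\ pcol p = j.
Proof.
case/and3P=> hi hj hij; have hj' : j < n.+1 by lia.
by exists (exist _ (Ordinal hi, Ordinal hj') (introT andP (conj hj hij))).
Qed.

Definition gz_up : rel (pos n) := fun p q =>
  ((prow q).+1 == prow p) &&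
  ((pcol q == pcol p) && eL (prow p) (pcol p)
   || (pcol q == (pcol p).+1) && eR (prow p) (pcol p)).

Lemma gz_up_row p q : gz_up p q -> (prow q).+1 = prow p.
Proof. by case/andP=> /eqP. Qed.

Lemma gz_adjE : gz_adj eL eR =2 undirected gz_up.
Proof.
move=> p q; rewrite /gz_adj /undirected /gz_up /=.
by case: (_.+1 == _); case: (_.+1 == _); case: (pcol q == pcol p);
  case: (pcol p == pcol q); case: (pcol q == _.+1); case: (pcol p == _.+1);
  rewrite /= ?orbF ?andbF ?orbA.
Qed.

Lemma gz_connE : @gz_conn n eL eR =2 connect (undirected gz_up).
Proof. exact: eq_connect gz_adjE. Qed.

Lemma gz_conn_sym : symmetric (@gz_conn n eL eR).
Proof.
apply: sym_connect_sym => p q.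
by rewrite !gz_adjE /undirected /= orbC.
Qed.

Hypothesis HE : is_enhanced_GZ n lam a enc eL eR.

Lemma gz_up_enc p q : gz_up p q -> enc (prow p) (pcol p).
Proof.
have [_ [_ [edge _]]] := HE; move=> pq; have p0 : 0 < prow p by rewrite -(gz_up_row pq).
have [edgeL edgeR] := edge _ _ p0 (valid_pos p).
by case/andP: pq => _ /orP[] /andP[_]; [case/edgeL | case/edgeR].
Qed.

Lemma gz_up_val p q : gz_up p q -> a (prow p) (pcol p) = a (prow q) (pcol q).
Proof.
have [_ [_ [edge _]]] := HE; move=> pq; have p0 : 0 < prow p by rewrite -(gz_up_row pq).
have [edgeL edgeR] := edge _ _ p0 (valid_pos p).
have -> : prow q = (prow p).-1 by rewrite -(gz_up_row pq).
by case/andP: pq => _ /orP[] /andP[/eqP->]; [case/edgeL=> -> | case/edgeR=> ->].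
Qed.

Lemma gz_conn_val p q : gz_conn eL eR p q -> a (prow p) (pcol p) = a (prow q) (pcol q).
Proof.
rewrite gz_connE => /connectP[s]; elim: s p => [|r s IH] p /=; first by move=> _ ->.
by case/andP=> /orP[/gz_up_val-> | /gz_up_val<-] /IH.
Qed.

Lemma gz_up_split_join p q r : 1 < prow p ->
  eL (prow p) (pcol p) -> eR (prow p) (pcol p) ->
  (prow q).+1 = prow p -> pcol q = pcol p ->
  (prow r).+1 = prow p -> pcol r = (pcol p).+1 ->
  exists2 t, gz_up q t & gz_up r t.
Proof.
have [_ [_ [_ [square _]]]] := HE.
move=> p1 eLp eRp rq cq rr cr; case/and3P: (valid_pos p) => v1 v2 v3.
have /andP[qR rL] : eR (prow p).-1 (pcol p) && eL (prow p).-1 (pcol p).+1.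
  by rewrite square ?prednK ?eLp ?eRp //; lia.
have [t [rt ct]] : exists t, prow t = (prow p).-2 /\ pcol t = (pcol p).+1.
  by apply: exists_pos; rewrite /valid; apply/and3P; split; lia.
have rpq : prow q = (prow p).-1 by lia.
have rpr : prow r = (prow p).-1 by lia.
by exists t; rewrite /gz_up rt ct ?cq ?cr ?rpq ?rpr ?qR ?rL eqxx ?orbT ?andbT;
  apply/eqP; lia.
Qed.

Lemma gz_up_diamond p q r : 1 < prow p -> gz_up p q -> gz_up p r -> q != r ->
  exists2 t, gz_up q t & gz_up r t.
Proof.
move=> p1 pq pr; have rq := gz_up_row pq; have rr := gz_up_row pr.
have same_col : pcol q = pcol r -> q = r by move=> c; apply: pos_inj; lia.
case/andP: pq => _ /orP[] /andP[/eqP cq hq];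
  case/andP: pr => _ /orP[] /andP[/eqP cr hr] qr.
- by case/eqP: qr; apply: same_col; rewrite cq cr.
- exact: gz_up_split_join p1 hq hr rq cq rr cr.
- by have [t] := gz_up_split_join p1 hr hq rr cr rq cq; exists t.
- by case/eqP: qr; apply: same_col; rewrite cq cr.
Qed.

Lemma gz_conn_below_enc p q :
  gz_conn eL eR p q -> prow p < prow q -> enc (prow q) (pcol q).
Proof.
rewrite gz_connE => /(undirected_rank_lt_step gz_up_row gz_up_diamond) /[apply].
by case=> r /gz_up_enc.
Qed.

Lemma gz_conn_highest_unique p q :
  gz_conn eL eR p q -> prow p = prow q -> 0 < prow p ->
  (forall r, gz_conn eL eR p r -> prow p <= prow r) -> p = q.
Proof.
move=> pq pqrow p0 hmin; rewrite gz_connE in pq.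
apply: (undirected_top_unique gz_up_row gz_up_diamond pq) => // r.
by rewrite -gz_connE; apply: hmin.
Qed.

Lemma gz_component_top p :
  (exists h, gz_conn eL eR p h /\
     forall q, gz_conn eL eR p q -> q <> h -> prow h < prow q) \/
  (exists q, gz_conn eL eR p q /\ prow q = 0).
Proof.
have [h ph hmin] := @arg_minnP _ p (gz_conn eL eR p) (@prow n) (connect0 _ p).
have [h0 | hpos] := posnP (prow h); first by right; exists h.
left; exists h; split => // q pq qh; rewrite ltn_neqAle hmin // andbT.
apply/eqP=> hq; apply: qh; symmetry; apply: gz_conn_highest_unique => //.
- by rewrite gz_conn_sym in ph; exact: connect_trans ph pq.
- by move=> r hr; apply: hmin; apply: connect_trans ph hr.
Qed.

Lemma unencircled_highest p : ~~ enc (prow p) (pcol p) ->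
  0 < prow p /\ forall r, gz_conn eL eR p r -> prow p <= prow r.
Proof.
have [_ [top_enc _]] := HE; move=> np; split.
  by rewrite lt0n; apply: contra np => /eqP p0; rewrite p0 top_enc // -p0 valid_pos.
move=> r pr; rewrite leqNgt; apply: contra np.
by apply: gz_conn_below_enc; rewrite gz_conn_sym.
Qed.

Lemma top_row_nondecreasing :
  {in [pred j | 0 < j <= n] &, {homo a 0 : j k / j <= k >-> (j <= k)%R}}.
Proof.
have [[_ interlace] _] := HE.
apply: homo_leq_in => [x | y x z | i j | j]; [exact: lexx | exact: le_trans | | ].
  by rewrite !inE => ? ? k ?; rewrite inE /=; lia.
rewrite !inE => /andP[j0 _] /andP[_ jn].
have v1j : valid n 1 j by rewrite /valid; apply/and3P; split; lia.
by have [lo hi] := interlace 1 j isT v1j; apply: le_trans lo hi.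
Qed.

Lemma top_row_step_conn p q : prow p = 0 -> prow q = 0 -> pcol q = (pcol p).+1 ->
  a 0 (pcol p) = a 0 (pcol q) -> gz_conn eL eR p q.
Proof.
have [_ [_ [_ [_ [top_eq _]]]]] := HE.
move=> p0 q0 cq pq; case/and3P: (valid_pos q) => _ _; rewrite q0 cq => pn.
have p1 : 0 < pcol p by case/and3P: (valid_pos p).
case/and3P: (top_eq _ p1 pn (etrans pq (congr1 _ cq))) => _ eLp eRp.
have [r [r1 rc]] : exists r, prow r = 1 /\ pcol r = pcol p.
  by apply: exists_pos; rewrite /valid; apply/and3P; split; lia.
have rp : gz_up r p by rewrite /gz_up p0 r1 rc !eqxx eLp.
have rq : gz_up r q by rewrite /gz_up q0 r1 rc cq !eqxx eRp orbT.
rewrite gz_connE; apply: (connect_trans (y := r)); apply: connect1.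
  by rewrite /undirected /= rp orbT.
by rewrite /undirected /= rq.
Qed.

Lemma top_row_conn p q : prow p = 0 -> prow q = 0 ->
  a 0 (pcol p) = a 0 (pcol q) -> gz_conn eL eR p q.
Proof.
wlog le_pq : p q / pcol p <= pcol q.
  move=> wlog p0 q0 pq; have [le | lt] := leqP (pcol p) (pcol q).
    exact: wlog le p0 q0 pq.
  by rewrite gz_conn_sym; apply: wlog (ltnW lt) q0 p0 (esym pq).
move=> p0 q0; have [d cq] : exists d, pcol q = pcol p + d by exists (pcol q - pcol p); lia.
elim: d p p0 le_pq cq => [|d IH] p p0 le_pq cq pq.
  by rewrite (@pos_inj p q) ?p0 ?q0 ?cq ?addn0 //; apply: connect0.
case/and3P: (valid_pos p) (valid_pos q) => _ p1 _ /and3P[_ _ qn].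
have [p' [p'0 cp']] : exists p', prow p' = 0 /\ pcol p' = (pcol p).+1.
  by apply: exists_pos; rewrite /valid; apply/and3P; split; lia.
have pp' : a 0 (pcol p) = a 0 (pcol p').
  apply/le_anti; rewrite top_row_nondecreasing ?inE /=; try lia.
  by rewrite pq top_row_nondecreasing ?inE /=; lia.
apply: connect_trans (top_row_step_conn p0 p'0 cp' pp') _.
by apply: (IH p' p'0 _ _ (etrans (esym pp') pq)); lia.
Qed.

Lemma top_row_connE p q : prow p = 0 -> prow q = 0 ->
  gz_conn eL eR p q <-> a (prow p) (pcol p) = a (prow q) (pcol q).
Proof.
move=> p0 q0; split; first exact: gz_conn_val.
by rewrite p0 q0; apply: top_row_conn.
Qed.

Definition gz_comp p : {set pos n} := [set q | gz_conn eL eR p q].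
Definition top_row : {set pos n} := [set p | prow p == 0].
Definition unencircled : {set pos n} := [set p | ~~ enc (prow p) (pcol p)].

Lemma gz_comp_eq p q : gz_comp p = gz_comp q -> gz_conn eL eR p q.
Proof.
by move=> pq; have := connect0 (gz_adj eL eR) q; rewrite -inE -/(gz_comp q) -pq inE.
Qed.

Lemma card_top_row_comps :
  size (undup [seq lam k | k <- iota 1 n]) <= #|gz_comp @: top_row|.
Proof.
have [[top_lam _] _] := HE.
rewrite card_imset_undup.
apply: (leq_trans _ (size_undup_map_factor (f := fun p => a 0 (pcol p)) _)).
  apply: uniq_leq_size (undup_uniq _) _ => v.
  rewrite !mem_undup => /mapP[k]; rewrite mem_iota => kn ->{v}.
  have [p [p0 pk]] : exists p, prow p = 0 /\ pcol p = n.+1 - k.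
    by apply: exists_pos; rewrite /valid; apply/and3P; split; lia.
  apply/mapP; exists p; first by rewrite mem_enum inE p0.
  by rewrite pk top_lam ?subKn //; lia.
move=> p q; rewrite !mem_enum !inE => /eqP p0 /eqP q0 /gz_comp_eq /gz_conn_val.
by rewrite p0 q0.
Qed.

Lemma gz_comp_inj_unencircled : {in unencircled &, injective gz_comp}.
Proof.
move=> p q; rewrite !inE => /unencircled_highest[p0 pmin] /unencircled_highest[_ qmin].
move=> /gz_comp_eq pq; apply: gz_conn_highest_unique => //.
by have := pmin _ pq; have := qmin p; rewrite gz_conn_sym => /(_ pq); lia.
Qed.

Lemma top_row_unencircled_disjoint :
  [disjoint gz_comp @: top_row & gz_comp @: unencircled].
Proof.
rewrite disjoints_subset; apply/subsetP => _ /imsetP[p + ->].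
rewrite !inE => /eqP p0; apply/imsetP => -[q].
rewrite inE => /unencircled_highest[q0 qmin] /gz_comp_eq pq.
by have := qmin p; rewrite gz_conn_sym => /(_ pq); lia.
Qed.

Lemma card_gz_components :
  size (undup [seq lam k | k <- iota 1 n]) + #|unencircled|
    <= #|gz_components n eL eR|.
Proof.
rewrite -(card_in_imset gz_comp_inj_unencircled).
apply: leq_trans (leq_add card_top_row_comps (leqnn _)) _.
have := (leq_card_setU (gz_comp @: top_row) (gz_comp @: unencircled)).2.
rewrite top_row_unencircled_disjoint => /eqP <-.
apply/subset_leq_card/subsetP => _ /setUP[] /imsetP[p _ ->]; exact: imset_f.
Qed.

End EnhancedPattern.

Theorem lemma4p1 (n : nat) (lam : nat -> int) (a : nat -> nat -> int)
    (enc eL eR : nat -> nat -> bool) :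
  is_partition n lam ->
  is_enhanced_GZ n lam a enc eL eR ->
  (* (1) row-0 entries are in the same component iff they have the same value *)
  (forall p q : pos n, prow p = 0 -> prow q = 0 ->
     gz_conn eL eR p q <-> a (prow p) (pcol p) = a (prow q) (pcol q)) /\
  (* (2) each component has a unique highest vertex or meets prow 0 *)
  (forall p : pos n,
     (exists h : pos n, gz_conn eL eR p h /\
        forall q : pos n, gz_conn eL eR p q -> q <> h -> prow h < prow q) \/
     (exists q : pos n, gz_conn eL eR p q /\ prow q = 0)) /\
  (* (3) every vertex lying strictly below some vertex of its component
         (i.e. every vertex except possibly the highest) is encircled *)
  (forall p q : pos n, gz_conn eL eR p q -> prow p < prow q ->
     enc (prow q) (pcol q)) /\
  (* in particular: #components >= #distinct values of lambda + #non-encircled *)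
  size (undup [seq lam k | k <- iota 1 n])
    + #|[set p : pos n | ~~ enc (prow p) (pcol p)]|
    <= #|gz_components n eL eR|.
Proof.
(* The interlacing conditions already order the top row. *)
move=> _ HE; split; first exact: top_row_connE HE.
split; first exact: gz_component_top HE.
split; first exact: gz_conn_below_enc HE.
exact: card_gz_components HE.
Qed.
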